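(* Assume each $f_i$ is $\mu$-strongly convex with $\mu>0$ and has $L$-Lipschitz gradient, let $x^*$ be the minimiser of $F=f+h$, and run SAGA with step size $\gamma=\frac{1}{2(\mu n+L)}$ starting from $x^0$ with $\phi_i^0=x^0$ for all $i$. Then for all $k\ge0$, \[ \mathbb{E}\Vert x^{k}-x^{*}\Vert^{2}\leq\left(1-\frac{\mu}{2(\mu n+L)}\right)^{k}\left[\Vert x^{0}-x^{*}\Vert^{2} + \frac{n}{\mu n + L}\left[f(x^{0}) -\langle f'(x^{*}),x^{0}-x^{*}\rangle -f(x^{*})\right]\right], \] where the expectation is over all random index choices up to step $k$.
   Context: Setting: $f(x)=\frac1n\sum_{i=1}^n f_i(x)$ with each $f_i\colon\mathbb{R}^d\to\mathbb{R}$ convex and differentiable with $L$-Lipschitz gradient $f_i'$; $h\colon\mathbb{R}^d\to\mathbb{R}\cup\{+\infty\}$ is proper, closed, convex; $F=f+h$. The proximal operator is $\mathrm{prox}^h_\gamma(y)=\operatorname{argmin}_{x}\{h(x)+\frac{1}{2\gamma}\Vert x-y\Vert^2\}$. SAGA algorithm with step size $\gamma>0$: start from $x^0\in\mathbb{R}^d$ and $\phi_i^0=x^0$ for all $i$. At iteration $k+1$, given $x^k$ and $\phi_1^k,\dots,\phi_n^k$: pick $j$ uniformly at random from $\{1,\dots,n\}$ (independently of the past); set $\phi_j^{k+1}=x^k$ and $\phi_i^{k+1}=\phi_i^k$ for $i\neq j$; set $w^{k+1}=x^k-\gamma\big[f_j'(\phi_j^{k+1})-f_j'(\phi_j^k)+\frac1n\sum_{i=1}^n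 f_i'(\phi_i^k)\big]$ and $x^{k+1}=\mathrm{prox}^h_\gamma(w^{k+1})$. *)

From Stdlib Require Import Reals List.
Require Stdlib.Vectors.Fin.
Open Scope R_scope.

Fixpoint fsum (n : nat) : (Fin.t n -> R) -> R :=
  match n with
  | O => fun _ => 0
  | S m => fun f => f Fin.F1 + fsum m (fun i => f (Fin.FS i))
  end.

Definition Vec (d : nat) := Fin.t d -> R.
Definition vadd {d} (x y : Vec d) : Vec d := fun i => x i + y i.
Definition vsub {d} (x y : Vec d) : Vec d := fun i => x i - y i.
Definition vscale {d} (a : R) (x : Vec d) : Vec d := fun i => a * x i.
Definition inner {d} (x y : Vec d) : R := fsum d (fun i => x i * y i).
Definition norm2 {d} (x : Vec d) : R := inner x x.
Definition norm {d} (x : Vec d) : R := sqrt (norm2 x).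

Definition vavg {d n} (v : Fin.t n -> Vec d) : Vec d :=
  fun k => / INR n * fsum n (fun i => v i k).

Definition has_gradient {d} (f : Vec d -> R) (g : Vec d -> Vec d) : Prop :=
  forall x eps, 0 < eps -> exists delta, 0 < delta /\
    forall y, norm (vsub y x) < delta ->
      Rabs (f y - f x - inner (g x) (vsub y x)) <= eps * norm (vsub y x).

Definition convex_fun {d} (f : Vec d -> R) : Prop :=
  forall x y t, 0 <= t <= 1 ->
    f (vadd (vscale t x) (vscale (1 - t) y)) <= t * f x + (1 - t) * f y.

Definition strongly_convex {d} (mu : R) (f : Vec d -> R) : Prop :=
  forall x y t, 0 <= t <= 1 ->
    f (vadd (vscale t x) (vscale (1 - t) y))
      <= t * f x + (1 - t) * f y - mu / 2 * t * (1 - t) * norm2 (vsub x y).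

Definition lipschitz_grad {d} (L : R) (g : Vec d -> Vec d) : Prop :=
  forall x y, norm (vsub (g x) (g y)) <= L * norm (vsub x y).

Inductive ER := ERfin (r : R) | ERinf.

Definition ER_le (a b : ER) : Prop :=
  match a, b with
  | _, ERinf => True
  | ERinf, ERfin _ => False
  | ERfin x, ERfin y => x <= y
  end.

Definition ER_plus_R (a : ER) (r : R) : ER :=
  match a with ERfin x => ERfin (x + r) | ERinf => ERinf end.

Definition R_lt_ER (r : R) (a : ER) : Prop :=
  match a with ERfin x => r < x | ERinf => True end.

Definition proper_ext {d} (h : Vec d -> ER) : Prop :=
  exists x, h x <> ERinf.

Definition convex_ext {d} (h : Vec d -> ER) : Prop :=
  forall x y t, 0 < t < 1 ->
    ER_le (h (vadd (vscale t x) (vscale (1 - t) y)))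
      (match h x, h y with
       | ERfin a, ERfin b => ERfin (t * a + (1 - t) * b)
       | _, _ => ERinf end).

Definition closed_ext {d} (h : Vec d -> ER) : Prop :=
  forall x (a : R), R_lt_ER a (h x) -> exists delta, 0 < delta /\
    forall y, norm (vsub y x) < delta -> R_lt_ER a (h y).

Definition is_prox {d} (h : Vec d -> ER) (gamma : R) (P : Vec d -> Vec d) : Prop :=
  forall y z,
    ER_le (ER_plus_R (h (P y)) (/ (2 * gamma) * norm2 (vsub (P y) y)))
          (ER_plus_R (h z) (/ (2 * gamma) * norm2 (vsub z y))).

Definition is_minimiser {d} (F : Vec d -> ER) (xs : Vec d) : Prop :=
  forall x, ER_le (F xs) (F x).

Definition saga_state (d n : nat) := (Vec d * (Fin.t n -> Vec d))%type.

Definition saga_step {d n} (g : Fin.t n -> Vec d -> Vec d) (gamma : R)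
  (P : Vec d -> Vec d) (st : saga_state d n) (j : Fin.t n) : saga_state d n :=
  let (x, phi) := st in
  let phi' := fun i => if Fin.eq_dec i j then x else phi i in
  let w := vsub x (vscale gamma
             (vadd (vsub (g j (phi' j)) (g j (phi j)))
                   (vavg (fun i => g i (phi i))))) in
  (P w, phi').

(* run SAGA along the sequence of chosen indices (head chosen first) *)
Definition saga_run {d n} (g : Fin.t n -> Vec d -> Vec d) (gamma : R)
  (P : Vec d -> Vec d) (s : list (Fin.t n)) (st : saga_state d n) : saga_state d n :=
  fold_left (saga_step g gamma P) s st.

Definition saga_init {d n} (x0 : Vec d) : saga_state d n := (x0, fun _ => x0).

(* expectation over k i.i.d. uniform indices in {1..n} *)
Fixpoint expect (n k : nat) (X : list (Fin.t n) -> R) : R :=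
  match k with
  | O => X nil
  | S k' => / INR n * fsum n (fun j => expect n k' (fun s => X (j :: s)))
  end.

From Stdlib Require Import Reals List Lra Lia Psatz FunctionalExtensionality.
Require Stdlib.Vectors.Fin.
Open Scope R_scope.

(* Track the Lyapunov function [T = |x - xs|^2 + kappa * (1/n) sum_i D_i(phi_i)], where
   [D_i(y) = f_i(y) - f_i(xs) - <f_i'(xs), y - xs>] is the Bregman divergence of [f_i] at the
   minimiser [xs].  As [xs = prox(xs - gamma f'(xs))] and the prox is firmly nonexpansive, a
   step moves [x - xs] by [gamma] times an unbiased estimate of [f'(x) - f'(xs)], whose
   variance is bounded through the [D_i] by the co-coercivity of strongly convex smooth
   functions.  For [gamma = 1/(2(mu n + L))] and [kappa = 2 gamma n (1 - gamma mu)] these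
   bounds make [T] contract by [1 - gamma mu] in one-step expectation; iterate, and use
   [kappa <= n / (mu n + L)] to bound [T] at the start. *)

Lemma fsum_ext n (f g : Fin.t n -> R) : (forall i, f i = g i) -> fsum n f = fsum n g.
Proof. intros H. f_equal. apply functional_extensionality. exact H. Qed.

Lemma fsum_add n : forall f g : Fin.t n -> R,
  fsum n (fun i => f i + g i) = fsum n f + fsum n g.
Proof. induction n; intros f g; simpl; [ring|]. rewrite IHn. ring. Qed.

Lemma fsum_scal n : forall c (f : Fin.t n -> R), fsum n (fun i => c * f i) = c * fsum n f.
Proof. induction n; intros c f; simpl; [ring|]. rewrite IHn. ring. Qed.

Lemma fsum_sub n (f g : Fin.t n -> R) : fsum n (fun i => f i - g i) = fsum n f - fsum n g.
Proof.
  replace (fsum n f - fsum n g) with (fsum n f + (-1) * fsum n g) by ring.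
  rewrite <- fsum_scal, <- fsum_add. apply fsum_ext. intros; ring.
Qed.

Lemma fsum_le n : forall f g : Fin.t n -> R, (forall i, f i <= g i) -> fsum n f <= fsum n g.
Proof.
  induction n; intros f g H; simpl; [lra|].
  apply Rplus_le_compat; [apply H | apply IHn; intros; apply H].
Qed.

Lemma fsum_const n c : fsum n (fun _ => c) = INR n * c.
Proof. induction n; simpl fsum; [simpl; ring|]. rewrite IHn, S_INR. ring. Qed.

Lemma fsum_swap n m : forall F : Fin.t n -> Fin.t m -> R,
  fsum n (fun i => fsum m (fun j => F i j)) = fsum m (fun j => fsum n (fun i => F i j)).
Proof.
  induction n; intros F; simpl.
  - rewrite fsum_const. ring.
  - rewrite IHn, <- fsum_add. reflexivity.
Qed.

Lemma fsum_delta n (j : Fin.t n) : forall A : Fin.t n -> R,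
  fsum n (fun i => if Fin.eq_dec i j then A i else 0) = A j.
Proof.
  induction j; intros A; simpl.
  - destruct (Fin.eq_dec Fin.F1 Fin.F1) as [_|C]; [|congruence].
    rewrite fsum_const. ring.
  - rewrite <- (IHj (fun i => A (Fin.FS i))), Rplus_0_l. apply fsum_ext. intros i.
    destruct (Fin.eq_dec (Fin.FS i) (Fin.FS j)) as [E|E];
      destruct (Fin.eq_dec i j) as [E'|E']; auto.
    + apply Fin.FS_inj in E. contradiction.
    + subst. contradiction.
Qed.

Definition avg (n : nat) (F : Fin.t n -> R) : R := / INR n * fsum n F.

Lemma avg_ext n F G : (forall i, F i = G i) -> avg n F = avg n G.
Proof. intros H. unfold avg. f_equal. apply fsum_ext; auto. Qed.

Lemma avg_add n F G : avg n (fun i => F i + G i) = avg n F + avg n G.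
Proof. unfold avg. rewrite fsum_add. ring. Qed.

Lemma avg_sub n F G : avg n (fun i => F i - G i) = avg n F - avg n G.
Proof. unfold avg. rewrite fsum_sub. ring. Qed.

Lemma avg_scal n c F : avg n (fun i => c * F i) = c * avg n F.
Proof. unfold avg. rewrite fsum_scal. ring. Qed.

Lemma avg_const n c : (0 < n)%nat -> avg n (fun _ => c) = c.
Proof. intros Hn. unfold avg. rewrite fsum_const. field. apply not_0_INR. lia. Qed.

(* No positivity of [n] is needed: [/ INR 0 = 0]. *)
Lemma avg_le n F G : (forall i, F i <= G i) -> avg n F <= avg n G.
Proof.
  intros H. unfold avg. apply Rmult_le_compat_l; [|apply fsum_le; auto].
  destruct n; [simpl; rewrite Rinv_0; lra|].
  left. apply Rinv_0_lt_compat, lt_0_INR. lia.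
Qed.

Lemma avg_nonneg n F : (forall i, 0 <= F i) -> 0 <= avg n F.
Proof.
  intros H. replace 0 with (avg n (fun _ => 0)) by (unfold avg; rewrite fsum_const; ring).
  apply avg_le; auto.
Qed.

Lemma avg_update n (j : Fin.t n) (F G : Fin.t n -> R) :
  avg n (fun i => if Fin.eq_dec i j then G i else F i) = avg n F + / INR n * (G j - F j).
Proof.
  rewrite (avg_ext n _ (fun i => F i + (if Fin.eq_dec i j then G i - F i else 0))).
  - rewrite avg_add. unfold avg at 2. rewrite (fsum_delta n j (fun i => G i - F i)). reflexivity.
  - intros i. destruct (Fin.eq_dec i j); ring.
Qed.

Ltac vext := apply functional_extensionality; intro; unfold vadd, vsub, vscale; ring.

Lemma vsub_swap {d} (x y : Vec d) : vsub x y = vscale (-1) (vsub y x).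
Proof. vext. Qed.

Lemma vavg_sub {d n} (X Y : Fin.t n -> Vec d) :
  vavg (fun i => vsub (X i) (Y i)) = vsub (vavg X) (vavg Y).
Proof.
  apply functional_extensionality. intros k. unfold vavg, vsub. rewrite fsum_sub. ring.
Qed.

Lemma inner_comm {d} (a b : Vec d) : inner a b = inner b a.
Proof. unfold inner. apply fsum_ext. intros; ring. Qed.

Lemma inner_add_l {d} (a b c : Vec d) : inner (vadd a b) c = inner a c + inner b c.
Proof. unfold inner, vadd. rewrite <- fsum_add. apply fsum_ext. intros; ring. Qed.

Lemma inner_sub_l {d} (a b c : Vec d) : inner (vsub a b) c = inner a c - inner b c.
Proof. unfold inner, vsub. rewrite <- fsum_sub. apply fsum_ext. intros; ring. Qed.

Lemma inner_scale_l {d} t (a c : Vec d) : inner (vscale t a) c = t * inner a c.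
Proof. unfold inner, vscale. rewrite <- fsum_scal. apply fsum_ext. intros; ring. Qed.

Lemma inner_add_r {d} (a b c : Vec d) : inner c (vadd a b) = inner c a + inner c b.
Proof. rewrite !(inner_comm c). apply inner_add_l. Qed.

Lemma inner_sub_r {d} (a b c : Vec d) : inner c (vsub a b) = inner c a - inner c b.
Proof. rewrite !(inner_comm c). apply inner_sub_l. Qed.

Lemma inner_scale_r {d} t (a c : Vec d) : inner c (vscale t a) = t * inner c a.
Proof. rewrite !(inner_comm c). apply inner_scale_l. Qed.

Lemma inner_vavg_l {d n} (X : Fin.t n -> Vec d) y :
  inner (vavg X) y = avg n (fun j => inner (X j) y).
Proof.
  unfold inner, vavg, avg.
  rewrite (fsum_ext d _ (fun k => / INR n * fsum n (fun j => X j k * y k))).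
  - rewrite fsum_scal, fsum_swap. reflexivity.
  - intros k. rewrite Rmult_assoc, (Rmult_comm _ (y k)), <- fsum_scal.
    f_equal. apply fsum_ext. intros; ring.
Qed.

Lemma inner_vavg_r {d n} (X : Fin.t n -> Vec d) y :
  inner y (vavg X) = avg n (fun j => inner y (X j)).
Proof. rewrite inner_comm, inner_vavg_l. apply avg_ext. intros; apply inner_comm. Qed.

Lemma norm2_nonneg {d} (a : Vec d) : 0 <= norm2 a.
Proof.
  unfold norm2, inner. rewrite <- (Rmult_0_r (INR d)), <- fsum_const.
  apply fsum_le. intros; nra.
Qed.

Lemma norm2_sub {d} (a b : Vec d) : norm2 (vsub a b) = norm2 a - 2 * inner a b + norm2 b.
Proof. unfold norm2. rewrite inner_sub_l, !inner_sub_r, (inner_comm b a). ring. Qed.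

Lemma norm2_add {d} (a b : Vec d) : norm2 (vadd a b) = norm2 a + 2 * inner a b + norm2 b.
Proof. unfold norm2. rewrite inner_add_l, !inner_add_r, (inner_comm b a). ring. Qed.

Lemma norm2_scale {d} t (a : Vec d) : norm2 (vscale t a) = t * t * norm2 a.
Proof. unfold norm2. rewrite inner_scale_l, inner_scale_r. ring. Qed.

Lemma norm2_sub_comm {d} (a b : Vec d) : norm2 (vsub a b) = norm2 (vsub b a).
Proof. rewrite (vsub_swap a b), norm2_scale. ring. Qed.

Lemma inner_young {d} t (a b : Vec d) : 0 < t -> 2 * inner a b <= t * norm2 a + / t * norm2 b.
Proof.
  intros Ht. assert (H := norm2_nonneg (vsub (vscale t a) b)).
  rewrite norm2_sub, norm2_scale, inner_scale_l in H.
  apply Rmult_le_reg_l with t; auto.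
  replace (t * (t * norm2 a + / t * norm2 b)) with (t * t * norm2 a + norm2 b) by (field; lra).
  lra.
Qed.

Lemma norm_nonneg {d} (a : Vec d) : 0 <= norm a.
Proof. apply sqrt_pos. Qed.

Lemma norm_sq {d} (a : Vec d) : norm a * norm a = norm2 a.
Proof. apply sqrt_sqrt, norm2_nonneg. Qed.

Lemma norm_scale {d} s (v : Vec d) : 0 <= s -> norm (vscale s v) = s * norm v.
Proof.
  intros Hs. unfold norm. rewrite norm2_scale, sqrt_mult_alt, sqrt_square; nra.
Qed.

Lemma le_of_forall_pos a c : (forall t, 0 < t -> a <= t * c) -> a <= 0.
Proof.
  intros H. destruct (Rle_dec a 0) as [|Ha]; auto. exfalso.
  destruct (Rle_dec c 0) as [Hc|Hc].
  - specialize (H 1 ltac:(lra)). lra.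
  - specialize (H (a / (2 * c)) ltac:(apply Rdiv_lt_0_compat; lra)).
    replace (a / (2 * c) * c) with (a / 2) in H by (field; lra). lra.
Qed.

Lemma inner_nonpos_of_norm0 {d} (a b : Vec d) : norm a = 0 -> inner a b <= 0.
Proof.
  intros Za. apply le_of_forall_pos with (norm2 b / 2). intros t Ht.
  assert (H := inner_young (/ t) a b ltac:(apply Rinv_0_lt_compat; lra)).
  rewrite Rinv_inv, <- norm_sq, Za in H. lra.
Qed.

Lemma cauchy_schwarz {d} (a b : Vec d) : inner a b <= norm a * norm b.
Proof.
  assert (Ha := norm_nonneg a). assert (Hb := norm_nonneg b).
  destruct (Req_dec (norm a) 0) as [Za|Za].
  { rewrite Za, Rmult_0_l. apply inner_nonpos_of_norm0; auto. }
  destruct (Req_dec (norm b) 0) as [Zb|Zb].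
  { rewrite Zb, Rmult_0_r, inner_comm. apply inner_nonpos_of_norm0; auto. }
  assert (H := inner_young (norm b / norm a) a b ltac:(apply Rdiv_lt_0_compat; lra)).
  rewrite <- !norm_sq in H.
  replace (norm b / norm a * (norm a * norm a) + / (norm b / norm a) * (norm b * norm b))
    with (2 * (norm a * norm b)) in H by (field; lra).
  lra.
Qed.

Section Variance.

Variables (d n : nat).
Hypothesis n_pos : (0 < n)%nat.

Lemma avg_inner_centered (b : Fin.t n -> Vec d) (y : Vec d) :
  avg n (fun j => inner y (vsub (b j) (vavg b))) = 0.
Proof.
  rewrite (avg_ext n _ (fun j => inner y (b j) - inner y (vavg b))).
  - rewrite avg_sub, avg_const, <- inner_vavg_r by auto. ring.
  - intros j. apply inner_sub_r.
Qed.

Lemma avg_norm2_centered (a : Fin.t n -> Vec d) :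
  avg n (fun j => norm2 (vsub (a j) (vavg a))) = avg n (fun j => norm2 (a j)) - norm2 (vavg a).
Proof.
  rewrite (avg_ext n _ (fun j => norm2 (a j) - 2 * inner (vavg a) (a j) + norm2 (vavg a))).
  - rewrite avg_add, avg_sub, avg_scal, avg_const, <- inner_vavg_r by auto.
    unfold norm2. ring.
  - intros j. rewrite norm2_sub, inner_comm. reflexivity.
Qed.

(* The variance bound behind SAGA: the correction [b j - vavg b] has mean zero, and
   Young's inequality with weight [beta] splits its interaction with [a j - vavg a]. *)
Lemma avg_norm2_sub_centered (a b : Fin.t n -> Vec d) beta : 0 < beta ->
  avg n (fun j => norm2 (vsub (a j) (vsub (b j) (vavg b))))
  <= (1 + beta) * avg n (fun j => norm2 (a j)) - beta * norm2 (vavg a)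
     + (1 + / beta) * avg n (fun j => norm2 (b j)).
Proof.
  intros Hb. set (c j := vsub (b j) (vavg b)).
  assert (Hj : forall j, norm2 (vsub (a j) (c j)) <=
    norm2 (a j) - 2 * inner (vavg a) (c j)
    + (beta * norm2 (vsub (a j) (vavg a)) + / beta * norm2 (c j)) + norm2 (c j)).
  { intros j. assert (Y := inner_young beta (vsub (vavg a) (a j)) (c j) Hb).
    rewrite norm2_sub_comm, inner_sub_l in Y. rewrite norm2_sub. lra. }
  eapply Rle_trans; [apply avg_le; exact Hj|].
  unfold c. rewrite !avg_add, avg_sub, !avg_scal, avg_inner_centered, !avg_norm2_centered.
  assert (0 <= / beta) by (left; apply Rinv_0_lt_compat; lra).
  assert (0 <= / beta * norm2 (vavg b)) by (apply Rmult_le_pos; auto using norm2_nonneg).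
  assert (0 <= norm2 (vavg b)) by apply norm2_nonneg.
  lra.
Qed.

End Variance.

Lemma has_gradient_chord {d} (f : Vec d -> R) g x y eps :
  has_gradient f g -> 0 < eps ->
  exists s, 0 < s <= eps /\
    s * (inner (g x) (vsub y x) - eps * norm (vsub y x))
      <= f (vadd (vscale s y) (vscale (1 - s) x)) - f x.
Proof.
  intros Hg Heps. set (v := vsub y x). assert (Hv := norm_nonneg v).
  destruct (Hg x eps Heps) as [delta [Hd Hdelta]].
  set (s := Rmin eps (delta / (2 * (norm v + 1)))).
  assert (Hs0 : 0 < s) by (apply Rmin_glb_lt; [lra | apply Rdiv_lt_0_compat; lra]).
  assert (Hse : s <= eps) by apply Rmin_l.
  assert (Hsd : s * (2 * (norm v + 1)) <= delta).
  { assert (s <= delta / (2 * (norm v + 1))) by apply Rmin_r.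
    apply Rmult_le_reg_r with (/ (2 * (norm v + 1))); [apply Rinv_0_lt_compat; lra|].
    rewrite Rmult_assoc, Rinv_r, Rmult_1_r; lra. }
  exists s. split; [lra|].
  set (z := vadd (vscale s y) (vscale (1 - s) x)).
  assert (Ez : vsub z x = vscale s v) by (unfold z, v; vext).
  assert (Hnz : norm (vsub z x) = s * norm v) by (rewrite Ez; apply norm_scale; lra).
  assert (Hclose : norm (vsub z x) < delta) by (rewrite Hnz; nra).
  specialize (Hdelta z Hclose). rewrite Ez, inner_scale_r, <- Ez, Hnz in Hdelta.
  assert (Hlow := Rle_abs (- (f z - f x - s * inner (g x) v))). rewrite Rabs_Ropp in Hlow.
  lra.
Qed.

Lemma strongly_convex_first_order {d} (f : Vec d -> R) g mu :
  0 <= mu -> has_gradient f g -> strongly_convex mu f ->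
  forall x y, f x + inner (g x) (vsub y x) + mu / 2 * norm2 (vsub y x) <= f y.
Proof.
  intros Hmu Hg Hsc x y. set (v := vsub y x).
  assert (Hnv := norm_nonneg v). assert (HV := norm2_nonneg v).
  cut (f x + inner (g x) v + mu / 2 * norm2 v - f y <= 0); [lra|].
  apply le_of_forall_pos with (norm v + mu / 2 * norm2 v). intros t Ht.
  set (eps := Rmin t (1 / 2)).
  assert (Heps : 0 < eps) by (apply Rmin_glb_lt; lra).
  assert (Het : eps <= t) by apply Rmin_l.
  assert (Heh : eps <= 1 / 2) by apply Rmin_r.
  destruct (has_gradient_chord f g x y eps Hg Heps) as [s [Hs Hchord]].
  assert (Hconv := Hsc y x s ltac:(lra)). fold v in Hchord, Hconv.
  assert (Hdiv : inner (g x) v - eps * norm v <= f y - f x - mu / 2 * (1 - s) * norm2 v).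
  { apply Rmult_le_reg_l with s; lra. }
  assert (mu / 2 * s * norm2 v <= mu / 2 * t * norm2 v).
  { apply Rmult_le_compat_r; auto. apply Rmult_le_compat_l; lra. }
  assert (eps * norm v <= t * norm v) by (apply Rmult_le_compat_r; lra).
  nra.
Qed.

Lemma convex_lipschitz_chord {d} (f : Vec d -> R) g L x v s t :
  (forall a b, f a + inner (g a) (vsub b a) <= f b) -> lipschitz_grad L g -> 0 <= s <= t ->
  f (vadd x (vscale t v))
    <= f (vadd x (vscale s v)) + (t - s) * (inner (g x) v + L * t * norm2 v).
Proof.
  intros Hcvx Hlip Hst.
  set (zs := vadd x (vscale s v)). set (zt := vadd x (vscale t v)).
  assert (Hc := Hcvx zt zs).
  assert (Es : vsub zs zt = vscale (s - t) v) by (unfold zs, zt; vext).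
  assert (Et : vsub zt x = vscale t v) by (unfold zt; vext).
  rewrite Es, inner_scale_r in Hc.
  assert (Hcs := cauchy_schwarz (vsub (g zt) (g x)) v). rewrite inner_sub_l in Hcs.
  assert (Hl := Hlip zt x). rewrite Et, norm_scale in Hl by lra.
  assert (norm (vsub (g zt) (g x)) * norm v <= L * (t * norm v) * norm v)
    by (apply Rmult_le_compat_r; auto using norm_nonneg).
  rewrite <- norm_sq.
  assert (inner (g zt) v <= inner (g x) v + L * t * (norm v * norm v)) by lra.
  assert ((t - s) * inner (g zt) v <= (t - s) * (inner (g x) v + L * t * (norm v * norm v)))
    by (apply Rmult_le_compat_l; lra).
  lra.
Qed.

Lemma le_of_forall_nat a c : 0 <= c -> (forall M : nat, (0 < M)%nat -> a <= c / INR M) -> a <= 0.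
Proof.
  intros Hc H. apply le_of_forall_pos with c. intros t Ht.
  destruct (archimed_cor1 t Ht) as [M [HM HM0]].
  specialize (H M HM0). unfold Rdiv in H.
  assert (c * / INR M <= t * c) by (rewrite Rmult_comm; apply Rmult_le_compat_r; lra).
  lra.
Qed.

(* The descent lemma.  Walking from [x] to [y] in [M] equal steps and bounding each step
   by [convex_lipschitz_chord] gives the constant [L/2 * (1 + 1/M)]; let [M] grow. *)
Lemma smooth_convex_upper_bound {d} (f : Vec d -> R) g L :
  0 <= L -> (forall a b, f a + inner (g a) (vsub b a) <= f b) -> lipschitz_grad L g ->
  forall x y, f y <= f x + inner (g x) (vsub y x) + L / 2 * norm2 (vsub y x).
Proof.
  intros HL Hcvx Hlip x y. set (v := vsub y x). assert (HV := norm2_nonneg v).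
  cut (f y - f x - inner (g x) v - L / 2 * norm2 v <= 0); [lra|].
  apply le_of_forall_nat with (L / 2 * norm2 v); [apply Rmult_le_pos; lra|].
  intros M HM. assert (HMp : 0 < INR M) by (apply lt_0_INR; lia).
  set (z k := vadd x (vscale (INR k / INR M) v)).
  assert (Hk : forall k : nat, f (z k) <= f x + INR k / INR M * inner (g x) v
                 + L * norm2 v * INR k * (INR k + 1) / (2 * (INR M * INR M))).
  { induction k as [|k IH].
    - assert (E : z 0%nat = x) by (unfold z; simpl; apply functional_extensionality;
        intro; unfold vadd, vscale; field; lra).
      rewrite E. simpl. unfold Rdiv. lra.
    - assert (Hstep := convex_lipschitz_chord f g L x v (INR k / INR M) (INR (S k) / INR M)
                         Hcvx Hlip).
      rewrite S_INR in *.
      assert (INR k / INR M <= (INR k + 1) / INR M)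
        by (unfold Rdiv; apply Rmult_le_compat_r; [left; apply Rinv_0_lt_compat|]; lra).
      assert (0 <= INR k / INR M)
        by (apply Rmult_le_pos; [apply pos_INR | left; apply Rinv_0_lt_compat; lra]).
      specialize (Hstep ltac:(lra)).
      replace (vadd x (vscale ((INR k + 1) / INR M) v)) with (z (S k))
        in Hstep by (unfold z; rewrite S_INR; reflexivity).
      fold (z k) in Hstep.
      replace ((INR k + 1) / INR M - INR k / INR M) with (/ INR M) in Hstep by (field; lra).
      enough (f x + INR k / INR M * inner (g x) v
                + L * norm2 v * INR k * (INR k + 1) / (2 * (INR M * INR M))
                + / INR M * (inner (g x) v + L * ((INR k + 1) / INR M) * norm2 v)
              = f x + (INR k + 1) / INR M * inner (g x) v
                + L * norm2 v * (INR k + 1) * (INR k + 1 + 1) / (2 * (INR M * INR M))) by lra.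
      field. lra. }
  specialize (Hk M).
  replace (z M) with y in Hk
    by (unfold z, v; apply functional_extensionality; intro; unfold vadd, vsub, vscale; field; lra).
  replace (INR M / INR M) with 1 in Hk by (field; lra).
  replace (L * norm2 v * INR M * (INR M + 1) / (2 * (INR M * INR M)))
    with (L / 2 * norm2 v + L / 2 * norm2 v / INR M) in Hk by (field; lra).
  lra.
Qed.

(* Nesterov's co-coercivity, applied to the [(L - m)]-smooth convex function
   [f - m/2 |.|^2]: minimise the quadratic upper bound along [w]. *)
Lemma shifted_grad_cocoercive {d} (f : Vec d -> R) g m L :
  m <= L ->
  (forall a b, f a + inner (g a) (vsub b a) + m / 2 * norm2 (vsub b a) <= f b) ->
  (forall a b, f b <= f a + inner (g a) (vsub b a) + L / 2 * norm2 (vsub b a)) ->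
  forall x y,
    norm2 (vsub (vsub (g y) (g x)) (vscale m (vsub y x)))
      <= 2 * (L - m) * (f y - f x - inner (g x) (vsub y x) - m / 2 * norm2 (vsub y x)).
Proof.
  intros HmL Hlo Hup x y.
  set (w := vsub (vsub (g y) (g x)) (vscale m (vsub y x))).
  set (E := f y - f x - inner (g x) (vsub y x) - m / 2 * norm2 (vsub y x)).
  assert (HW : norm2 w = inner (g y) w - inner (g x) w - m * inner (vsub y x) w).
  { unfold norm2 at 1, w at 1. rewrite !inner_sub_l, inner_scale_l, (inner_sub_l y x w). reflexivity. }
  assert (Key : forall t, 0 <= t -> t * norm2 w - (L - m) * t * t / 2 * norm2 w <= E).
  { intros t Ht. set (z := vsub y (vscale t w)).
    assert (H1 := Hlo x z). assert (H2 := Hup y z).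
    assert (Ezx : vsub z x = vsub (vsub y x) (vscale t w)) by (unfold z; vext).
    assert (Ezy : vsub z y = vscale (- t) w) by (unfold z; vext).
    rewrite Ezx, inner_sub_r, inner_scale_r, norm2_sub, norm2_scale, inner_scale_r in H1.
    rewrite Ezy, inner_scale_r, norm2_scale in H2.
    unfold E. nra. }
  assert (HWn := norm2_nonneg w).
  destruct (Req_dec L m) as [Eq|Ne].
  - rewrite Eq, Rminus_diag, Rmult_0_r, Rmult_0_l.
    apply le_of_forall_pos with E. intros t Ht.
    specialize (Key (/ t) ltac:(left; apply Rinv_0_lt_compat; lra)).
    rewrite Eq, Rminus_diag in Key.
    apply Rmult_le_reg_l with (/ t); [apply Rinv_0_lt_compat; lra|].
    replace (/ t * (t * E)) with E by (field; lra). lra.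
  - specialize (Key (/ (L - m)) ltac:(left; apply Rinv_0_lt_compat; lra)).
    replace (/ (L - m) * norm2 w - (L - m) * / (L - m) * / (L - m) / 2 * norm2 w)
      with (/ (2 * (L - m)) * norm2 w) in Key by (field; lra).
    apply Rmult_le_reg_l with (/ (2 * (L - m))); [apply Rinv_0_lt_compat; lra|].
    replace (/ (2 * (L - m)) * (2 * (L - m) * E)) with E by (field; lra). lra.
Qed.

Lemma strongly_convex_smooth_grad_bound {d} (f : Vec d -> R) g mu L :
  mu <= L ->
  (forall a b, f a + inner (g a) (vsub b a) + mu / 2 * norm2 (vsub b a) <= f b) ->
  (forall a b, f b <= f a + inner (g a) (vsub b a) + L / 2 * norm2 (vsub b a)) ->
  forall x y,
    norm2 (vsub (g x) (g y)) + L * mu * norm2 (vsub x y)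
      <= 2 * L * (f y - f x - inner (g x) (vsub y x))
         + 2 * mu * (f x - f y - inner (g y) (vsub x y)).
Proof.
  intros HmL Hlo Hup x y.
  assert (H := shifted_grad_cocoercive f g mu L HmL Hlo Hup x y).
  rewrite norm2_sub, norm2_scale, inner_scale_r, inner_sub_l in H.
  rewrite norm2_sub_comm, (norm2_sub_comm x y), (vsub_swap x y), inner_scale_r.
  lra.
Qed.

(* Needs [d > 0]: on the zero space every function is [mu]-strongly convex. *)
Lemma strong_convexity_le_lipschitz {d} (f : Vec (S d) -> R) g mu L :
  0 <= mu -> has_gradient f g -> strongly_convex mu f -> lipschitz_grad L g -> mu <= L.
Proof.
  intros Hmu Hg Hsc Hlip.
  set (x := fun _ : Fin.t (S d) => 0). set (y := fun _ : Fin.t (S d) => 1).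
  assert (H1 := strongly_convex_first_order f g mu Hmu Hg Hsc x y).
  assert (H2 := strongly_convex_first_order f g mu Hmu Hg Hsc y x).
  rewrite (vsub_swap x y), norm2_scale, inner_scale_r in H2.
  assert (HV : norm2 (vsub y x) = INR (S d)).
  { unfold norm2, inner, vsub, x, y. rewrite fsum_const. ring. }
  assert (Hpos : 0 < INR (S d)) by (apply lt_0_INR; lia).
  assert (Hcs := cauchy_schwarz (vsub (g y) (g x)) (vsub y x)). rewrite inner_sub_l in Hcs.
  assert (norm (vsub (g y) (g x)) * norm (vsub y x) <= L * norm (vsub y x) * norm (vsub y x))
    by (apply Rmult_le_compat_r; auto using norm_nonneg).
  rewrite Rmult_assoc, norm_sq in *.
  apply Rmult_le_reg_r with (INR (S d)); [lra|]. rewrite <- HV. lra.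
Qed.

Lemma le_of_forall_small a c : 0 <= c -> (forall t, 0 < t < 1 -> a <= t * c) -> a <= 0.
Proof.
  intros Hc H. apply le_of_forall_pos with c. intros t Ht.
  destruct (Rlt_dec t (1 / 2)) as [Hl|Hl].
  - apply H; lra.
  - assert (a <= 1 / 2 * c) by (apply H; lra). nra.
Qed.

Lemma prox_variational_ineq {d} (h : Vec d -> ER) gam P :
  0 < gam -> convex_ext h -> is_prox h gam P ->
  forall y u ru, h u = ERfin ru -> exists rz, h (P y) = ERfin rz /\
    rz - ru <= / gam * inner (vsub (P y) y) (vsub u (P y)).
Proof.
  intros Hg Hc Hp y u ru Hu. set (z := P y).
  assert (H0 := Hp y u). rewrite Hu in H0. fold z in H0.
  destruct (h z) as [rz|] eqn:Hz; [|contradiction].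
  exists rz. split; auto.
  assert (HW := norm2_nonneg (vsub u z)). set (W := norm2 (vsub u z)) in *.
  cut (rz - ru - / gam * inner (vsub z y) (vsub u z) <= 0); [lra|].
  apply le_of_forall_small with (/ (2 * gam) * W).
  { apply Rmult_le_pos; auto. left; apply Rinv_0_lt_compat; lra. }
  intros t Ht.
  set (zt := vadd (vscale t u) (vscale (1 - t) z)).
  assert (Hct := Hc u z t Ht). fold zt in Hct. rewrite Hu, Hz in Hct.
  assert (Hpt := Hp y zt). fold z in Hpt. rewrite Hz in Hpt.
  destruct (h zt) as [rt|]; [|contradiction]. simpl in Hct, Hpt.
  assert (E : vsub zt y = vadd (vsub z y) (vscale t (vsub u z))) by (unfold zt; vext).
  rewrite E, norm2_add, norm2_scale, inner_scale_r in Hpt. fold W in Hpt.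
  assert (Hk : t * (rz - ru) <= t * (/ gam * inner (vsub z y) (vsub u z) + t * (/ (2 * gam) * W))).
  { enough (/ (2 * gam) * (norm2 (vsub z y) + 2 * (t * inner (vsub z y) (vsub u z)) + t * t * W)
       = / (2 * gam) * norm2 (vsub z y)
         + t * (/ gam * inner (vsub z y) (vsub u z) + t * (/ (2 * gam) * W))) by lra.
    field. lra. }
  apply Rmult_le_reg_l in Hk; lra.
Qed.

Lemma minimiser_variational_ineq {d} (h : Vec d -> ER) (fa : Vec d -> R) gstar L xs :
  0 <= L -> proper_ext h -> convex_ext h ->
  (forall z, fa z <= fa xs + inner gstar (vsub z xs) + L / 2 * norm2 (vsub z xs)) ->
  is_minimiser (fun x => ER_plus_R (h x) (fa x)) xs ->
  exists hs, h xs = ERfin hs /\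
    forall u ru, h u = ERfin ru -> hs - ru <= inner gstar (vsub u xs).
Proof.
  intros HL [x0 Hx0] Hc Hf Hm.
  assert (H0 := Hm x0). simpl in H0.
  destruct (h x0) as [r0|]; [|congruence].
  destruct (h xs) as [hs|] eqn:Hxs; [|contradiction].
  exists hs. split; auto. intros u ru Hu.
  assert (HW := norm2_nonneg (vsub u xs)). set (W := norm2 (vsub u xs)) in *.
  cut (hs - ru - inner gstar (vsub u xs) <= 0); [lra|].
  apply le_of_forall_small with (L / 2 * W); [apply Rmult_le_pos; lra|].
  intros t Ht.
  set (zt := vadd (vscale t u) (vscale (1 - t) xs)).
  assert (Hct := Hc u xs t Ht). fold zt in Hct. rewrite Hu, Hxs in Hct.
  assert (Hmt := Hm zt). simpl in Hmt. rewrite Hxs in Hmt.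
  destruct (h zt) as [rt|]; [|contradiction]. simpl in Hct, Hmt.
  assert (Hft := Hf zt).
  assert (E : vsub zt xs = vscale t (vsub u xs)) by (unfold zt; vext).
  rewrite E, norm2_scale, inner_scale_r in Hft. fold W in Hft.
  assert (Hk : t * (hs - ru - inner gstar (vsub u xs)) <= t * (t * (L / 2 * W))) by nra.
  apply Rmult_le_reg_l in Hk; lra.
Qed.

(* [xs] is the fixed point [P (xs - gam gstar)]; the prox is firmly nonexpansive. *)
Lemma prox_nonexpansive_at_minimiser {d} (h : Vec d -> ER) gam P xs hs gstar :
  0 < gam -> convex_ext h -> is_prox h gam P -> h xs = ERfin hs ->
  (forall u ru, h u = ERfin ru -> hs - ru <= inner gstar (vsub u xs)) ->
  forall y, norm2 (vsub (P y) xs) <= norm2 (vsub y (vsub xs (vscale gam gstar))).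
Proof.
  intros Hg Hc Hp Hxs Hmin y.
  destruct (prox_variational_ineq h gam P Hg Hc Hp y xs hs Hxs) as [rz [Hz H1]].
  assert (H2 := Hmin (P y) rz Hz).
  set (e := vsub (P y) xs) in *.
  assert (E1 : vsub (P y) y = vsub e (vsub y xs)) by (unfold e; vext).
  assert (E2 : vsub xs (P y) = vscale (-1) e) by (unfold e; vext).
  assert (E3 : vsub y (vsub xs (vscale gam gstar)) = vadd (vsub y xs) (vscale gam gstar))
    by vext.
  rewrite E1, E2, inner_scale_r, inner_sub_l in H1.
  assert (H3 : 0 <= - norm2 e + inner (vsub y xs) e + gam * inner gstar e).
  { assert (Hk : 0 <= / gam * (- (inner e e - inner (vsub y xs) e)) + inner gstar e) by lra.
    apply Rmult_le_compat_l with (r := gam) in Hk; [|lra].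
    rewrite Rmult_0_r, Rmult_plus_distr_l, <- Rmult_assoc, Rinv_r, Rmult_1_l in Hk by lra.
    unfold norm2. lra. }
  rewrite E3. assert (Y := inner_young 1 (vadd (vsub y xs) (vscale gam gstar)) e ltac:(lra)).
  rewrite inner_add_l, inner_scale_l, Rinv_1 in Y. lra.
Qed.

Lemma expect_le n k : forall X Y : list (Fin.t n) -> R,
  (forall s, X s <= Y s) -> expect n k X <= expect n k Y.
Proof.
  induction k; intros X Y H; simpl; auto.
  apply (avg_le n (fun j => expect n k (fun s => X (j :: s)))
                  (fun j => expect n k (fun s => Y (j :: s)))).
  intros j. apply IHk. auto.
Qed.

Lemma expect_zero n k : expect n k (fun _ => 0) = 0.
Proof. induction k; simpl; auto. rewrite IHk, fsum_const. ring. Qed.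

Lemma expect_fold_contraction {S n} (step : S -> Fin.t n -> S) (V : S -> R) rho :
  0 <= rho -> (forall st, avg n (fun j => V (step st j)) <= rho * V st) ->
  forall k st, expect n k (fun s => V (fold_left step s st)) <= rho ^ k * V st.
Proof.
  intros Hr Hs k. induction k as [|k IH]; intros st; simpl; [lra|].
  change (avg n (fun j => expect n k (fun s => V (fold_left step s (step st j))))
            <= rho * rho ^ k * V st).
  eapply Rle_trans; [apply avg_le; intros j; apply IH|].
  rewrite avg_scal. rewrite (Rmult_comm rho), Rmult_assoc.
  apply Rmult_le_compat_l; [apply pow_le|]; auto.
Qed.

Section SagaAnalysis.

Variables (d n : nat) (fs : Fin.t n -> Vec d -> R) (gs : Fin.t n -> Vec d -> Vec d)
  (xs : Vec d) (mu L : R) (P : Vec d -> Vec d).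

Hypothesis n_pos : (0 < n)%nat.
Hypothesis mu_pos : 0 < mu.
Hypothesis mu_le_L : mu <= L.
Hypothesis fs_lower : forall i x y,
  fs i x + inner (gs i x) (vsub y x) + mu / 2 * norm2 (vsub y x) <= fs i y.
Hypothesis fs_upper : forall i x y,
  fs i y <= fs i x + inner (gs i x) (vsub y x) + L / 2 * norm2 (vsub y x).

Local Notation N := (INR n).
Local Notation gstar := (vavg (fun i => gs i xs)).

Definition saga_gamma : R := / (2 * (mu * INR n + L)).
(* Young weight of the variance bound, chosen so that [saga_gamma * (1 + saga_beta) * L = 1]. *)
Definition saga_beta : R := (2 * mu * INR n + L) / L.
Definition saga_kappa : R := 2 * saga_gamma * INR n * (1 - saga_gamma * mu).

Hypothesis P_nonexpansive : forall y,
  norm2 (vsub (P y) xs) <= norm2 (vsub y (vsub xs (vscale saga_gamma gstar))).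

Definition bregman (i : Fin.t n) (y : Vec d) : R :=
  fs i y - fs i xs - inner (gs i xs) (vsub y xs).

Definition grad_gap (y : Vec d) (i : Fin.t n) : Vec d := vsub (gs i y) (gs i xs).

Definition lyapunov (st : saga_state d n) : R :=
  norm2 (vsub (fst st) xs) + saga_kappa * avg n (fun i => bregman i (snd st i)).

Lemma N_ge_1 : 1 <= N.
Proof. apply (le_INR 1 n). lia. Qed.

Lemma saga_gamma_pos : 0 < saga_gamma.
Proof. assert (H := N_ge_1). apply Rinv_0_lt_compat. nra. Qed.

Lemma saga_beta_pos : 0 < saga_beta.
Proof. assert (H := N_ge_1). unfold saga_beta. apply Rdiv_lt_0_compat; nra. Qed.

Lemma saga_kappa_nonneg : 0 <= saga_kappa.
Proof.
  assert (H := N_ge_1). unfold saga_kappa, saga_gamma.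
  assert (0 < mu * N + L) by nra.
  replace (2 * / (2 * (mu * N + L)) * N * (1 - / (2 * (mu * N + L)) * mu))
    with (N * (2 * (mu * N + L) - mu) / (2 * (mu * N + L) * (mu * N + L))) by (field; lra).
  apply Rmult_le_pos; [nra | left; apply Rinv_0_lt_compat; nra].
Qed.

Lemma saga_kappa_le : saga_kappa <= N / (mu * N + L).
Proof.
  assert (H := N_ge_1). assert (Hg := saga_gamma_pos).
  replace (N / (mu * N + L)) with (2 * saga_gamma * N)
    by (unfold saga_gamma; field; nra).
  unfold saga_kappa. assert (0 <= 2 * saga_gamma * N * (saga_gamma * mu)) by
    (repeat apply Rmult_le_pos; lra).
  lra.
Qed.

Lemma saga_gamma_beta : saga_gamma * (1 + saga_beta) * L = 1.
Proof. assert (H := N_ge_1). unfold saga_gamma, saga_beta. field. nra. Qed.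

Lemma saga_kappa_balance :
  saga_kappa * / N = 2 * (saga_gamma * saga_gamma) * ((1 + saga_beta) * L - mu).
Proof. assert (H := N_ge_1). unfold saga_kappa, saga_beta, saga_gamma. field. nra. Qed.

(* With [p = mu N] and [Q = p + L] this is [4 Q^2 L <= (2 Q - mu) (p + 2 L) (2 p + L)],
   which holds because [mu <= p]. *)
Lemma saga_kappa_dominates :
  2 * L * (saga_gamma * saga_gamma) * (1 + / saga_beta) <= saga_kappa * (/ N - saga_gamma * mu).
Proof.
  assert (H := N_ge_1). set (p := mu * N).
  assert (Hp : mu <= p) by (unfold p; nra).
  assert (HL : 0 < L) by lra.
  enough (0 <= ((2 * (p + L) - mu) * (p + 2 * L) * (2 * p + L) - 4 * (p + L) * (p + L) * L)
                / (4 * (p + L) * (p + L) * (p + L) * (2 * p + L))).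
  { replace (saga_kappa * (/ N - saga_gamma * mu)) with
      (2 * L * (saga_gamma * saga_gamma) * (1 + / saga_beta)
       + ((2 * (p + L) - mu) * (p + 2 * L) * (2 * p + L) - 4 * (p + L) * (p + L) * L)
         / (4 * (p + L) * (p + L) * (p + L) * (2 * p + L))); [lra|].
    unfold saga_kappa, saga_beta, saga_gamma, p. field. repeat split; nra. }
  apply Rmult_le_pos; [|left; apply Rinv_0_lt_compat; repeat apply Rmult_lt_0_compat; nra].
  assert ((p + 2 * L) * (p + 2 * L) * (2 * p + L)
          <= (2 * (p + L) - mu) * (p + 2 * L) * (2 * p + L))
    by (apply Rmult_le_compat_r; [nra | apply Rmult_le_compat_r; nra]).
  assert (0 <= p * p * p) by (repeat apply Rmult_le_pos; lra).
  assert (0 <= p * p * L) by (repeat apply Rmult_le_pos; lra).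
  assert (0 <= p * L * L) by (repeat apply Rmult_le_pos; lra).
  nra.
Qed.

(* The bookkeeping of the contraction: the [V]-terms give [1 - gamma mu] by
   [saga_gamma_beta], the [Dx]-terms cancel by [saga_kappa_balance] and the [Dp]-terms are
   absorbed by [saga_kappa_dominates]. *)
Lemma lyapunov_descent_arith V Pp G A B Dx Dp S :
  S <= (1 + saga_beta) * A - saga_beta * G + (1 + / saga_beta) * B ->
  A <= 2 * L * (Pp - Dx) + 2 * mu * Dx - L * mu * V ->
  2 * mu * Dx <= G -> B <= 2 * L * Dp -> 0 <= Dx -> 0 <= Dp ->
  V - 2 * saga_gamma * Pp + saga_gamma * saga_gamma * S
    + saga_kappa * (Dp + / N * (Dx - Dp))
  <= (1 - saga_gamma * mu) * (V + saga_kappa * Dp).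
Proof.
  intros HS HA HG HB HDx HDp.
  assert (HN := N_ge_1). assert (Hg := saga_gamma_pos).
  assert (Hb := saga_beta_pos).
  assert (Hib : 0 < / saga_beta) by (apply Rinv_0_lt_compat; lra).
  set (g2 := saga_gamma * saga_gamma). assert (Hg2 : 0 < g2) by (unfold g2; nra).
  assert (T1 : g2 * S <= g2 * ((1 + saga_beta) * A - saga_beta * G + (1 + / saga_beta) * B))
    by (apply Rmult_le_compat_l; lra).
  assert (T2 : g2 * (1 + saga_beta) * A
               <= g2 * (1 + saga_beta) * (2 * L * (Pp - Dx) + 2 * mu * Dx - L * mu * V))
    by (apply Rmult_le_compat_l; nra).
  assert (T3 : g2 * saga_beta * (2 * mu * Dx) <= g2 * saga_beta * G)
    by (apply Rmult_le_compat_l; nra).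
  assert (T4 : g2 * (1 + / saga_beta) * B <= g2 * (1 + / saga_beta) * (2 * L * Dp))
    by (apply Rmult_le_compat_l; nra).
  assert (T5 := Rmult_le_compat_r Dp _ _ HDp saga_kappa_dominates).
  assert (E1 := saga_gamma_beta). assert (E2 := saga_kappa_balance). fold g2 in T5, E2.
  assert (E3 : g2 * (1 + saga_beta) * L = saga_gamma)
    by (unfold g2; transitivity (saga_gamma * (saga_gamma * (1 + saga_beta) * L));
        [ring | rewrite E1; ring]).
  assert (E4 : saga_kappa * / N * Dx = 2 * g2 * ((1 + saga_beta) * L - mu) * Dx) by (rewrite E2; ring).
  nra.
Qed.

Lemma bregman_nonneg i y : 0 <= bregman i y.
Proof.
  assert (H := fs_lower i xs y).
  assert (0 <= mu / 2 * norm2 (vsub y xs)) by (apply Rmult_le_pos; [lra | apply norm2_nonneg]).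
  unfold bregman. lra.
Qed.

Lemma norm2_le_lyapunov st : norm2 (vsub (fst st) xs) <= lyapunov st.
Proof.
  assert (0 <= saga_kappa * avg n (fun i => bregman i (snd st i))).
  { apply Rmult_le_pos; [apply saga_kappa_nonneg | apply avg_nonneg; intros; apply bregman_nonneg]. }
  unfold lyapunov. lra.
Qed.

Lemma avg_fs_upper z :
  avg n (fun i => fs i z)
  <= avg n (fun i => fs i xs) + inner gstar (vsub z xs) + L / 2 * norm2 (vsub z xs).
Proof.
  rewrite inner_vavg_l, <- (avg_const n (L / 2 * norm2 (vsub z xs))), <- !avg_add by auto.
  apply avg_le. intros i. apply fs_upper.
Qed.

Lemma avg_bregman y :
  avg n (fun i => bregman i y)
  = avg n (fun i => fs i y) - inner gstar (vsub y xs) - avg n (fun i => fs i xs).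
Proof. unfold bregman. rewrite !avg_sub, inner_vavg_l. ring. Qed.

Lemma grad_gap_norm2_le i y : norm2 (grad_gap y i) <= 2 * L * bregman i y.
Proof.
  assert (H := strongly_convex_smooth_grad_bound (fs i) (gs i) 0 L ltac:(lra)
                 ltac:(intros a b; assert (H := fs_lower i a b);
                       assert (0 <= mu / 2 * norm2 (vsub b a))
                         by (apply Rmult_le_pos; [lra | apply norm2_nonneg]); lra)
                 (fs_upper i) xs y).
  rewrite norm2_sub_comm in H. unfold grad_gap, bregman. lra.
Qed.

Lemma avg_grad_gap_norm2_le x :
  avg n (fun j => norm2 (grad_gap x j))
  <= 2 * L * (inner (vavg (grad_gap x)) (vsub x xs) - avg n (fun i => bregman i x))
     + 2 * mu * avg n (fun i => bregman i x) - L * mu * norm2 (vsub x xs).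
Proof.
  set (v := vsub x xs).
  assert (Hi : forall i, norm2 (grad_gap x i)
    <= 2 * L * (inner (grad_gap x i) v - bregman i x) + 2 * mu * bregman i x - L * mu * norm2 v).
  { intros i. assert (H := strongly_convex_smooth_grad_bound (fs i) (gs i) mu L mu_le_L
                             (fs_lower i) (fs_upper i) x xs).
    rewrite (vsub_swap xs x), inner_scale_r in H.
    unfold grad_gap, bregman. rewrite inner_sub_l. fold v in H |- *. lra. }
  eapply Rle_trans; [apply avg_le; exact Hi|].
  rewrite avg_sub, avg_add, !avg_scal, avg_sub, avg_const, inner_vavg_l by auto.
  lra.
Qed.

Lemma avg_bregman_le_grad_gap x :
  2 * mu * avg n (fun i => bregman i x) <= norm2 (vavg (grad_gap x)).
Proof.
  set (v := vsub x xs). set (abar := vavg (grad_gap x)).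
  assert (Hi : forall i, bregman i x <= inner (grad_gap x i) v - mu / 2 * norm2 v).
  { intros i. assert (H := fs_lower i x xs).
    rewrite (vsub_swap xs x), inner_scale_r, norm2_scale in H.
    unfold bregman, grad_gap. rewrite inner_sub_l. fold v in H |- *. lra. }
  assert (Havg : avg n (fun i => bregman i x) <= inner abar v - mu / 2 * norm2 v).
  { eapply Rle_trans; [apply avg_le; exact Hi|].
    rewrite avg_sub, avg_const by auto. unfold abar. rewrite inner_vavg_l. lra. }
  assert (Hsq := norm2_nonneg (vsub abar (vscale mu v))).
  rewrite norm2_sub, norm2_scale, inner_scale_r in Hsq.
  nra.
Qed.

(* After replacing [phi j] by [x], the SAGA direction minus [gstar] is the gradient gap at
   [x] corrected by the centred gradient gap at the stored points. *)
Lemma lyapunov_saga_step x phi j :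
  lyapunov (saga_step gs saga_gamma P (x, phi) j)
  <= norm2 (vsub (vsub x xs) (vscale saga_gamma
       (vsub (grad_gap x j)
             (vsub (grad_gap (phi j) j) (vavg (fun i => grad_gap (phi i) i))))))
     + saga_kappa * (avg n (fun i => bregman i (phi i))
                     + / N * (bregman j x - bregman j (phi j))).
Proof.
  unfold lyapunov, saga_step. simpl fst. simpl snd.
  destruct (Fin.eq_dec j j) as [_|C]; [|congruence].
  apply Rplus_le_compat.
  - eapply Rle_trans; [apply P_nonexpansive|]. apply Req_le. f_equal.
    unfold grad_gap. rewrite vavg_sub. vext.
  - apply Req_le. f_equal.
    rewrite (avg_ext n _ (fun i => if Fin.eq_dec i j then bregman i x else bregman i (phi i))),
      avg_update; [reflexivity|].
    intros i. destruct (Fin.eq_dec i j); reflexivity.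
Qed.

Lemma avg_lyapunov_saga_step x phi :
  avg n (fun j => lyapunov (saga_step gs saga_gamma P (x, phi) j))
  <= norm2 (vsub x xs) - 2 * saga_gamma * inner (vavg (grad_gap x)) (vsub x xs)
     + saga_gamma * saga_gamma
       * avg n (fun j => norm2 (vsub (grad_gap x j)
           (vsub (grad_gap (phi j) j) (vavg (fun i => grad_gap (phi i) i)))))
     + saga_kappa * (avg n (fun i => bregman i (phi i))
                     + / N * (avg n (fun i => bregman i x) - avg n (fun i => bregman i (phi i)))).
Proof.
  set (v := vsub x xs). set (b := fun i => grad_gap (phi i) i).
  eapply Rle_trans; [apply avg_le; intros j; apply lyapunov_saga_step|].
  rewrite avg_add. apply Req_le. f_equal.
  - rewrite (avg_ext n _ (fun j => norm2 v
        - 2 * saga_gamma * (inner v (grad_gap x j) - inner v (vsub (b j) (vavg b)))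
        + saga_gamma * saga_gamma * norm2 (vsub (grad_gap x j) (vsub (b j) (vavg b))))).
    + rewrite avg_add, avg_sub, avg_const, !avg_scal, avg_sub, avg_inner_centered by auto.
      rewrite <- (inner_vavg_r (grad_gap x) v), (inner_comm v).
      unfold b. ring.
    + intros j. rewrite norm2_sub, norm2_scale, inner_scale_r, inner_sub_r. unfold v, b. ring.
  - rewrite avg_scal, avg_add, avg_const, avg_scal, avg_sub by auto. reflexivity.
Qed.

Lemma lyapunov_contraction st :
  avg n (fun j => lyapunov (saga_step gs saga_gamma P st j))
  <= (1 - saga_gamma * mu) * lyapunov st.
Proof.
  destruct st as [x phi].
  eapply Rle_trans; [apply avg_lyapunov_saga_step|].
  unfold lyapunov. simpl fst. simpl snd.
  apply lyapunov_descent_arith with (A := avg n (fun j => norm2 (grad_gap x j)))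
    (B := avg n (fun j => norm2 (grad_gap (phi j) j))) (G := norm2 (vavg (grad_gap x))).
  - apply avg_norm2_sub_centered; auto using saga_beta_pos.
  - apply avg_grad_gap_norm2_le.
  - apply avg_bregman_le_grad_gap.
  - rewrite <- avg_scal. apply avg_le. intros i. apply grad_gap_norm2_le.
  - apply avg_nonneg. intros; apply bregman_nonneg.
  - apply avg_nonneg. intros; apply bregman_nonneg.
Qed.

Theorem saga_linear_convergence x0 k :
  expect n k (fun s => norm2 (vsub (fst (saga_run gs saga_gamma P s (saga_init x0))) xs))
  <= (1 - mu / (2 * (mu * N + L))) ^ k *
     (norm2 (vsub x0 xs)
      + N / (mu * N + L) *
        (avg n (fun i => fs i x0) - inner gstar (vsub x0 xs) - avg n (fun i => fs i xs))).
Proof.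
  assert (Hrho : 0 <= 1 - saga_gamma * mu).
  { assert (H := N_ge_1). unfold saga_gamma.
    replace (1 - / (2 * (mu * N + L)) * mu) with ((mu * (2 * N - 1) + 2 * L) / (2 * (mu * N + L)))
      by (field; nra).
    apply Rmult_le_pos; [nra | left; apply Rinv_0_lt_compat; nra]. }
  eapply Rle_trans; [apply expect_le; intros s; apply norm2_le_lyapunov|].
  eapply Rle_trans; [apply (expect_fold_contraction _ lyapunov _ Hrho lyapunov_contraction)|].
  replace (mu / (2 * (mu * N + L))) with (saga_gamma * mu) by (unfold saga_gamma, Rdiv; ring).
  apply Rmult_le_compat_l; [apply pow_le; exact Hrho|].
  unfold lyapunov, saga_init. simpl fst. simpl snd. rewrite <- avg_bregman.
  apply Rplus_le_compat_l, Rmult_le_compat_r; [|apply saga_kappa_le].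
  apply avg_nonneg. intros; apply bregman_nonneg.
Qed.

End SagaAnalysis.

Theorem corollary1 (d n : nat) (fs : Fin.t n -> Vec d -> R)
  (gs : Fin.t n -> Vec d -> Vec d) (h : Vec d -> ER) (mu L : R)
  (P : Vec d -> Vec d) (x0 xs : Vec d) :
  (0 < n)%nat -> 0 < mu ->
  (forall i, has_gradient (fs i) (gs i)) ->
  (forall i, convex_fun (fs i)) ->
  (forall i, strongly_convex mu (fs i)) ->
  (forall i, lipschitz_grad L (gs i)) ->
  proper_ext h -> convex_ext h -> closed_ext h ->
  is_prox h (/ (2 * (mu * INR n + L))) P ->
  is_minimiser (fun x => ER_plus_R (h x) (/ INR n * fsum n (fun i => fs i x))) xs ->
  forall k : nat,
    expect n k (fun s =>
      norm2 (vsub (fst (saga_run gs (/ (2 * (mu * INR n + L))) P s (saga_init x0))) xs))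
    <= (1 - mu / (2 * (mu * INR n + L))) ^ k *
       (norm2 (vsub x0 xs)
        + INR n / (mu * INR n + L) *
          (/ INR n * fsum n (fun i => fs i x0)
           - inner (vavg (fun i => gs i xs)) (vsub x0 xs)
           - / INR n * fsum n (fun i => fs i xs))).
Proof.
  intros Hn Hmu Hgrad _ Hsc Hlip Hproper Hconvex _ Hprox Hmin k.
  destruct d as [|d].
  - assert (E : x0 = xs)
      by (apply functional_extensionality; intros i; apply (Fin.case0 (fun _ => _) i)).
    subst x0. eapply Rle_trans; [apply (expect_le n k _ (fun _ => 0)); intros; apply Rle_refl|].
    rewrite expect_zero. unfold norm2, inner. simpl fsum. lra.
  - assert (i0 : Fin.t n) by (destruct n; [lia | exact Fin.F1]).
    assert (HmuL : mu <= L)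
      by (apply (strong_convexity_le_lipschitz (fs i0) (gs i0)); auto; lra).
    assert (Hlower : forall i x y,
      fs i x + inner (gs i x) (vsub y x) + mu / 2 * norm2 (vsub y x) <= fs i y)
      by (intros; apply strongly_convex_first_order; auto; lra).
    assert (Hupper : forall i x y,
      fs i y <= fs i x + inner (gs i x) (vsub y x) + L / 2 * norm2 (vsub y x)).
    { intros i. apply smooth_convex_upper_bound; auto; [lra|]. intros a b.
      assert (0 <= mu / 2 * norm2 (vsub b a)) by (apply Rmult_le_pos; [lra | apply norm2_nonneg]).
      specialize (Hlower i a b). lra. }
    destruct (minimiser_variational_ineq h (fun x => avg n (fun i => fs i x)) _ L xs
                ltac:(lra) Hproper Hconvex (avg_fs_upper _ _ _ _ _ _ Hn Hupper) Hmin)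
      as [hs [Hhs Hsubgrad]].
    apply saga_linear_convergence; auto.
    apply (prox_nonexpansive_at_minimiser h _ P xs hs); auto.
    apply saga_gamma_pos; auto.
Qed.
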